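(* Let $\mathbf S=\langle S,+,0,\mathscr F\rangle$ be a semilattice with operators, and define $\eta$ on $\operatorname{Con}\mathbf S$ by $\eta(\theta)=\operatorname{con}_{\mathrm{SL}}(0/\theta)$, the semilattice congruence generated by collapsing the $0$-class of $\theta$ to $0$. Then $\eta$ satisfies, for all $x,y,z\in L=\operatorname{Con}\mathbf S$: (I1) $\eta(x)\le x$; (I2) $x\ge y$ implies $\eta(x)\ge\eta(y)$; (I3) $\eta^2(x)=\eta(x)$; (I4) $\eta(1)=1$; (I5) if $\eta(x)=u$ for all $x\in X\subseteq L$ then $\eta(\bigvee X)=u$; (I6) $\eta(x)\vee(y\wedge z)=(\eta(x)\vee y)\wedge(\eta(x)\vee z)$; (I7) the image $\eta(L)$ is the complete join subsemilattice of $L$ generated by $\eta(L)\cap L_c$, where $L_c$ is the set of compact elements of $L$.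
   Context: A semilattice with operators is a join semilattice $(S,+)$ with least element $0$ together with a set $\mathscr F$ of unary maps preserving $+$ and $0$; congruences are equivalence relations compatible with $+$ and all $f\in\mathscr F$. $0/\theta$ denotes the $0$-class of $\theta$. Explicitly, $x\,\eta(\theta)\,y$ iff $x+i=y+i$ for some $i\in 0/\theta$ (this relation is a congruence of $\mathbf S$). *)

From Stdlib Require Import List.
Set Implicit Arguments.

Record SLO := {
  car :> Type;
  sjoin : car -> car -> car;
  szero : car;
  Fidx : Type;
  fop : Fidx -> car -> car;
  sjoinA : forall x y z, sjoin x (sjoin y z) = sjoin (sjoin x y) z;
  sjoinC : forall x y, sjoin x y = sjoin y x;
  sjoinI : forall x, sjoin x x = x;
  sjoin0 : forall x, sjoin szero x = x;
  fop_join : forall f x y, fop f (sjoin x y) = sjoin (fop f x) (fop f y);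
  fop_zero : forall f, fop f szero = szero
}.

Section Con.
Variable S : SLO.
Local Notation "x + y" := (sjoin S x y).
Local Notation "0" := (szero S).

Definition rel := S -> S -> Prop.

Definition is_con (t : rel) : Prop :=
  (forall x, t x x) /\
  (forall x y, t x y -> t y x) /\
  (forall x y z, t x y -> t y z -> t x z) /\
  (forall x y x' y', t x y -> t x' y' -> t (x + x') (y + y')) /\
  (forall f x y, t x y -> t (fop S f x) (fop S f y)).

Definition con_le (t u : rel) : Prop := forall x y, t x y -> u x y.
Definition con_eq (t u : rel) : Prop := con_le t u /\ con_le u t.

Definition con_top : rel := fun _ _ => True.
Definition con_meet (t u : rel) : rel := fun x y => t x y /\ u x y.
Definition con_gen (R : rel) : rel :=
  fun x y => forall t, is_con t -> con_le R t -> t x y.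
Definition con_bigjoin (X : rel -> Prop) : rel :=
  con_gen (fun x y => exists t, X t /\ t x y).
Definition con_join (t u : rel) : rel := con_gen (fun x y => t x y \/ u x y).

Definition con_compact (t : rel) : Prop :=
  forall X : rel -> Prop, (forall u, X u -> is_con u) ->
    con_le t (con_bigjoin X) ->
    exists l : list rel, (forall u, In u l -> X u) /\
                         con_le t (con_bigjoin (fun u => In u l)).

(** eta(theta) = con_SL(0/theta):  x eta(theta) y iff x+i = y+i for some i in 0/theta *)
Definition eta (t : rel) : rel :=
  fun x y => exists i, t i 0 /\ x + i = y + i.

Definition in_eta_image (t : rel) : Prop :=
  exists u, is_con u /\ con_eq t (eta u).

End Con.

(* The relation eta(theta) identifies p and q when p + i = q + i for some i in
   the 0-class of theta, so eta(theta) depends only on 0/theta (an ideal closed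
   under F); (I1)-(I4) follow at once. For (I5), every congruence with 0-class
   I lies below the syntactic congruence of I ("w(p) in I iff w(q) in I for
   every composite w of operators"), whose 0-class is again I; hence a join of
   congruences with 0-class I has 0-class I. For (I6), the join eta(x) v y is
   explicitly "y(p + i, q + i) for some i in 0/x", and distributivity can be
   read off this description. For (I7), the fixed points of eta are exactly the
   joins of principal congruences con(i, 0), which are compact and fixed. *)
From Stdlib Require Import List.

Section ConSLO.
Variable S : SLO.
Local Notation "x + y" := (sjoin S x y).
Local Notation "0" := (szero S).

Lemma sjoin0r (x : S) : x + 0 = x.
Proof. rewrite sjoinC; apply sjoin0. Qed.

Lemma sjoinCA (x y z : S) : x + (y + z) = y + (x + z).
Proof. rewrite !sjoinA, (sjoinC S x y); reflexivity. Qed.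

Lemma sjoinACA (a b c d : S) : (a + b) + (c + d) = (a + c) + (b + d).
Proof. rewrite <- !sjoinA, (sjoinCA b c d); reflexivity. Qed.

Definition fword (w : list (Fidx S)) (p : S) : S := fold_right (fop S) p w.

Lemma fword_join w p q : fword w (p + q) = fword w p + fword w q.
Proof. induction w as [|f w IH]; simpl; [reflexivity|]. rewrite IH; apply fop_join. Qed.

Section Congruence.
Variable t : rel S.
Hypothesis Ht : is_con t.

Lemma con_refl x : t x x.
Proof. destruct Ht as (Hr & _); apply Hr. Qed.

Lemma con_sym x y : t x y -> t y x.
Proof. destruct Ht as (_ & Hs & _); apply Hs. Qed.

Lemma con_trans y x z : t x y -> t y z -> t x z.
Proof. destruct Ht as (_ & _ & Htr & _); apply Htr. Qed.

Lemma con_sjoin x y x' y' : t x y -> t x' y' -> t (x + x') (y + y').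
Proof. destruct Ht as (_ & _ & _ & Hj & _); apply Hj. Qed.

Lemma con_fop f x y : t x y -> t (fop S f x) (fop S f y).
Proof. destruct Ht as (_ & _ & _ & _ & Hf); apply Hf. Qed.

Lemma con_fword w x y : t x y -> t (fword w x) (fword w y).
Proof. intros H; induction w; simpl; [exact H | apply con_fop; assumption]. Qed.

Lemma con_absorb i x : t i 0 -> t (x + i) x.
Proof.
  intros Hi; rewrite <- (sjoin0r x) at 2. apply con_sjoin; [apply con_refl | exact Hi].
Qed.

Lemma con_zero_sjoin p q : t (p + q) 0 <-> t p 0 /\ t q 0.
Proof.
  split.
  - intros H.
    assert (Hp : t (p + (p + q)) p) by (apply con_absorb, H).
    assert (Hq : t (q + (p + q)) q) by (apply con_absorb, H).
    rewrite sjoinA, sjoinI in Hp. rewrite sjoinCA, sjoinI in Hq.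
    split; apply con_trans with (p + q); [apply con_sym; exact Hp | exact H
                                         | apply con_sym; exact Hq | exact H].
  - intros [Hp Hq]. rewrite <- (sjoin0 S 0). apply con_sjoin; assumption.
Qed.

End Congruence.

Lemma is_con_eq : @is_con S eq.
Proof. split; [|split; [|split; [|split]]]; intros; subst; reflexivity. Qed.

Lemma is_con_con_gen (R : rel S) : is_con (con_gen R).
Proof.
  unfold con_gen; split; [|split; [|split; [|split]]].
  - intros x t Ht _; apply con_refl, Ht.
  - intros x y H t Ht HR; apply con_sym, H; assumption.
  - intros x y z H1 H2 t Ht HR; apply con_trans with y; [| apply H1 | apply H2]; assumption.
  - intros x y x' y' H1 H2 t Ht HR; apply con_sjoin; [| apply H1 | apply H2]; assumption.
  - intros f x y H t Ht HR; apply con_fop, H; assumption.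
Qed.

Lemma con_gen_incl (R : rel S) : con_le R (con_gen R).
Proof. intros x y H t _ HR; apply HR, H. Qed.

Lemma con_gen_least (R t : rel S) : is_con t -> con_le R t -> con_le (con_gen R) t.
Proof. intros Ht HR x y H; apply H; assumption. Qed.

Lemma con_bigjoin_incl (X : rel S -> Prop) (t : rel S) : X t -> con_le t (con_bigjoin X).
Proof. intros Ht p q H; apply con_gen_incl; exists t; auto. Qed.

Lemma is_con_meet (y z : rel S) : is_con y -> is_con z -> is_con (con_meet y z).
Proof.
  intros Hy Hz; unfold con_meet; split; [|split; [|split; [|split]]].
  - intros p; split; apply con_refl; assumption.
  - intros p q [H1 H2]; split; apply con_sym; assumption.
  - intros p q r [H1 H2] [H3 H4]; split; apply con_trans with q; assumption.
  - intros p q p' q' [H1 H2] [H3 H4]; split; apply con_sjoin; assumption.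
  - intros f p q [H1 H2]; split; apply con_fop; assumption.
Qed.

Definition eta_join (x y : rel S) : rel S :=
  fun p q => exists i, x i 0 /\ y (p + i) (q + i).

Lemma is_con_eta_join (x y : rel S) : is_con x -> is_con y -> is_con (eta_join x y).
Proof.
  intros Hx Hy; unfold eta_join; split; [|split; [|split; [|split]]].
  - intros p; exists 0; split; [apply con_refl, Hx | apply con_refl, Hy].
  - intros p q [i [Hi H]]; exists i; split; [exact Hi | apply con_sym; assumption].
  - intros p q r [i [Hi H1]] [j [Hj H2]]; exists (i + j); split.
    + apply (con_zero_sjoin x Hx); split; assumption.
    + apply con_trans with (q + (i + j)); [exact Hy | |].
      * rewrite !sjoinA; apply con_sjoin; [exact Hy | exact H1 | apply con_refl, Hy].
      * rewrite (sjoinC S i j), !sjoinA; apply con_sjoin; [exact Hy | exact H2 | apply con_refl, Hy].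
  - intros p q p' q' [i [Hi H1]] [j [Hj H2]]; exists (i + j); split.
    + apply (con_zero_sjoin x Hx); split; assumption.
    + rewrite (sjoinACA p p' i j), (sjoinACA q q' i j); apply con_sjoin; assumption.
  - intros f p q [i [Hi H]]; exists (fop S f i); split.
    + rewrite <- (fop_zero S f); apply con_fop; assumption.
    + rewrite <- !fop_join; apply con_fop; assumption.
Qed.

(* [eta x] is [eta_join x eq] up to conversion. *)
Lemma is_con_eta (x : rel S) : is_con x -> is_con (eta x).
Proof. intros Hx; exact (is_con_eta_join x (@eq S) Hx is_con_eq). Qed.

Lemma eta_le (x : rel S) : is_con x -> con_le (eta x) x.
Proof.
  intros Hx p q [i [Hi E]].
  apply con_trans with (p + i); [exact Hx | apply con_sym; [exact Hx |] |].
  - apply con_absorb; assumption.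
  - rewrite E; apply con_absorb; assumption.
Qed.

Lemma eta_zero_class (x : rel S) i : is_con x -> eta x i 0 <-> x i 0.
Proof.
  intros Hx; split.
  - apply eta_le, Hx.
  - intros Hi; exists i; split; [exact Hi | rewrite sjoinI, sjoin0; reflexivity].
Qed.

Lemma eta_mono_zero_class (x y : rel S) :
  (forall i, y i 0 -> x i 0) -> con_le (eta y) (eta x).
Proof. intros H p q [i [Hi E]]; exists i; auto. Qed.

Lemma eta_mono (x y : rel S) : con_le y x -> con_le (eta y) (eta x).
Proof. intros H; apply eta_mono_zero_class; auto. Qed.

Lemma eta_idem (x : rel S) : is_con x -> con_eq (eta (eta x)) (eta x).
Proof.
  intros Hx; split.
  - apply eta_le, is_con_eta, Hx.
  - apply eta_mono_zero_class; intros i; apply eta_zero_class, Hx.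
Qed.

Lemma eta_top : con_eq (eta (con_top S)) (con_top S).
Proof.
  split; [intros p q _; exact I |].
  intros p q _; exists (p + q); split; [exact I |].
  rewrite sjoinA, sjoinI, (sjoinC S p q), sjoinA, sjoinI; reflexivity.
Qed.

Lemma con_join_etaE (x y : rel S) : is_con x -> is_con y ->
  con_eq (con_join (eta x) y) (eta_join x y).
Proof.
  intros Hx Hy; split.
  - apply con_gen_least; [apply is_con_eta_join; assumption |].
    intros p q [[i [Hi E]] | H]; [exists i | exists 0].
    + rewrite E; split; [exact Hi | apply con_refl, Hy].
    + rewrite !sjoin0r; split; [apply con_refl, Hx | exact H].
  - intros p q [i [Hi H]].
    assert (HJ : is_con (con_join (eta x) y)) by apply is_con_con_gen.
    assert (Hstep : forall r, con_join (eta x) y r (r + i)).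
    { intros r; apply con_gen_incl; left; exists i; split; [exact Hi |].
      rewrite <- sjoinA, sjoinI; reflexivity. }
    apply con_trans with (p + i); [exact HJ | apply Hstep |].
    apply con_trans with (q + i); [exact HJ | apply con_gen_incl; right; exact H |].
    apply con_sym; [exact HJ | apply Hstep].
Qed.

Lemma con_join_mono_r (x y z : rel S) :
  con_le y z -> con_le (con_join x y) (con_join x z).
Proof.
  intros H; apply con_gen_least; [apply is_con_con_gen |].
  intros p q [Hpq | Hpq]; apply con_gen_incl; auto.
Qed.

Lemma con_join_eta_distr (x y z : rel S) : is_con x -> is_con y -> is_con z ->
  con_eq (con_join (eta x) (con_meet y z))
         (con_meet (con_join (eta x) y) (con_join (eta x) z)).
Proof.
  intros Hx Hy Hz; split.
  - intros p q H; split; revert H; apply con_join_mono_r; intros a b [Ha Hb]; assumption.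
  - intros p q [Hpy Hpz].
    apply (proj1 (con_join_etaE x y Hx Hy)) in Hpy as [i [Hi Hy']].
    apply (proj1 (con_join_etaE x z Hx Hz)) in Hpz as [j [Hj Hz']].
    apply (proj2 (con_join_etaE x (con_meet y z) Hx (is_con_meet y z Hy Hz))).
    exists (i + j); split; [apply (con_zero_sjoin x Hx); split; assumption |]; split.
    + rewrite !sjoinA; apply con_sjoin; [exact Hy | exact Hy' | apply con_refl, Hy].
    + rewrite (sjoinC S i j), !sjoinA; apply con_sjoin; [exact Hz | exact Hz' | apply con_refl, Hz].
Qed.

Definition syntactic_con (u : rel S) : rel S :=
  fun p q => forall w, u (fword w p) 0 <-> u (fword w q) 0.

Lemma is_con_syntactic_con (u : rel S) : is_con u -> is_con (syntactic_con u).
Proof.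
  intros Hu; unfold syntactic_con; split; [|split; [|split; [|split]]].
  - intros p w; reflexivity.
  - intros p q H w; symmetry; apply H.
  - intros p q r H1 H2 w; rewrite (H1 w); apply H2.
  - intros p q p' q' H1 H2 w.
    rewrite !fword_join, !(con_zero_sjoin u Hu), (H1 w), (H2 w); reflexivity.
  - intros f p q H w.
    specialize (H (w ++ f :: nil)); unfold fword in *.
    rewrite !fold_right_app in H; exact H.
Qed.

Lemma con_le_syntactic_con (x u : rel S) : is_con x ->
  (forall i, x i 0 <-> u i 0) -> con_le x (syntactic_con u).
Proof.
  intros Hx Hxu p q H w; rewrite <- !Hxu.
  assert (Hw := con_fword x Hx w p q H).
  split; intros Hz; [apply con_trans with (fword w p) | apply con_trans with (fword w q)];
    try assumption; apply con_sym; assumption.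
Qed.

Lemma con_bigjoin_zero_class (X : rel S -> Prop) (u : rel S) :
  (forall x, X x -> is_con x) -> is_con u ->
  (forall x, X x -> forall i, x i 0 <-> u i 0) ->
  forall i, con_bigjoin X i 0 -> u i 0.
Proof.
  intros HX Hu HXu i Hi.
  assert (Hle : con_le (con_bigjoin X) (syntactic_con u)).
  { apply con_gen_least; [apply is_con_syntactic_con, Hu |].
    intros p q [x [Hx Hpq]]; apply (con_le_syntactic_con x u); auto. }
  apply (Hle i 0 Hi nil), con_refl, Hu.
Qed.

Lemma eta_bigjoin_const (X : rel S -> Prop) (u : rel S) :
  (forall x, X x -> is_con x) -> (exists x, X x) -> is_con u ->
  (forall x, X x -> con_eq (eta x) u) ->
  con_eq (eta (con_bigjoin X)) u.
Proof.
  intros HX [x0 Hx0] Hu Heq.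
  assert (HXu : forall x, X x -> forall i, x i 0 <-> u i 0).
  { intros x Hx i; rewrite <- (eta_zero_class x i (HX x Hx)).
    destruct (Heq x Hx) as [E1 E2]; split; auto. }
  destruct (Heq x0 Hx0) as [E1 E2]; split.
  - intros p q H; apply E1; revert H; apply eta_mono_zero_class.
    intros i Hi; apply HXu; [exact Hx0 |].
    apply (con_bigjoin_zero_class X u); assumption.
  - intros p q H; apply E2 in H; revert H; apply eta_mono, con_bigjoin_incl, Hx0.
Qed.

Lemma con_bigjoin_mono (X Y : rel S -> Prop) :
  (forall t, X t -> Y t) -> con_le (con_bigjoin X) (con_bigjoin Y).
Proof.
  intros HXY; apply con_gen_least; [apply is_con_con_gen |].
  intros p q [t [Ht H]]; apply (con_bigjoin_incl Y t); auto.
Qed.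

Definition finite_bigjoin (X : rel S -> Prop) : rel S :=
  fun p q => exists l : list (rel S),
    (forall t, In t l -> X t) /\ con_bigjoin (fun t => In t l) p q.

Lemma con_bigjoin_app_l (l l' : list (rel S)) :
  con_le (con_bigjoin (fun t => In t l)) (con_bigjoin (fun t => In t (l ++ l'))).
Proof. apply con_bigjoin_mono; intros t Ht; apply in_or_app; auto. Qed.

Lemma con_bigjoin_app_r (l l' : list (rel S)) :
  con_le (con_bigjoin (fun t => In t l')) (con_bigjoin (fun t => In t (l ++ l'))).
Proof. apply con_bigjoin_mono; intros t Ht; apply in_or_app; auto. Qed.

Lemma is_con_finite_bigjoin (X : rel S -> Prop) : is_con (finite_bigjoin X).
Proof.
  assert (HX : forall l l' : list (rel S), (forall t, In t l -> X t) ->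
             (forall t, In t l' -> X t) -> forall t, In t (l ++ l') -> X t).
  { intros l l' Hl Hl' t Ht; apply in_app_or in Ht as [Ht | Ht]; auto. }
  unfold finite_bigjoin; split; [|split; [|split; [|split]]].
  - intros p; exists nil; split; [intros t [] | apply con_refl, is_con_con_gen].
  - intros p q [l [Hl H]]; exists l; split; [exact Hl | apply con_sym; [apply is_con_con_gen | exact H]].
  - intros p q r [l [Hl H1]] [l' [Hl' H2]]; exists (l ++ l'); split; [apply HX; assumption |].
    apply con_trans with q; [apply is_con_con_gen | apply con_bigjoin_app_l, H1
                                                  | apply con_bigjoin_app_r, H2].
  - intros p q p' q' [l [Hl H1]] [l' [Hl' H2]]; exists (l ++ l'); split; [apply HX; assumption |].
    apply con_sjoin; [apply is_con_con_gen | apply con_bigjoin_app_l, H1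
                                           | apply con_bigjoin_app_r, H2].
  - intros f p q [l [Hl H]]; exists l; split; [exact Hl | apply con_fop; [apply is_con_con_gen | exact H]].
Qed.

Lemma con_bigjoin_finite (X : rel S -> Prop) :
  con_le (con_bigjoin X) (finite_bigjoin X).
Proof.
  apply con_gen_least; [apply is_con_finite_bigjoin |].
  intros p q [t [Ht H]]; exists (t :: nil); split.
  - intros u [<- | []]; exact Ht.
  - apply (con_bigjoin_incl _ t); [left |]; auto.
Qed.

Definition pair_rel (a b : S) : rel S := fun p q => p = a /\ q = b.

Lemma con_gen_pair_least (a b : S) (t : rel S) :
  is_con t -> t a b -> con_le (con_gen (pair_rel a b)) t.
Proof. intros Ht Hab; apply con_gen_least; [exact Ht |]; intros p q [-> ->]; exact Hab. Qed.

Lemma con_compact_principal (a b : S) : con_compact (con_gen (pair_rel a b)).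
Proof.
  intros X _ Hle.
  assert (Hab : con_bigjoin X a b) by (apply Hle, con_gen_incl; split; reflexivity).
  destruct (con_bigjoin_finite X a b Hab) as [l [Hl H]].
  exists l; split; [exact Hl |].
  apply con_gen_pair_least; [apply is_con_con_gen | exact H].
Qed.

Lemma eta_principal_zero (i : S) :
  con_eq (eta (con_gen (pair_rel i 0))) (con_gen (pair_rel i 0)).
Proof.
  split; [apply eta_le, is_con_con_gen |].
  apply con_gen_pair_least; [apply is_con_eta, is_con_con_gen |].
  apply eta_zero_class; [apply is_con_con_gen |].
  apply con_gen_incl; split; reflexivity.
Qed.

Lemma in_eta_image_fixed (t : rel S) : is_con t -> in_eta_image t <-> con_eq (eta t) t.
Proof.
  intros Ht; split.
  - intros [u [Hu [E1 E2]]]; split; [apply eta_le, Ht |].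
    intros p q H; apply E1 in H; revert H; apply eta_mono_zero_class.
    intros i Hi; apply E2, eta_zero_class; assumption.
  - intros E; exists t; split; [exact Ht |]; split; apply E.
Qed.

Lemma eta_fixed_bigjoin (Y : rel S -> Prop) :
  (forall r, Y r -> is_con r /\ con_eq (eta r) r) ->
  con_eq (eta (con_bigjoin Y)) (con_bigjoin Y).
Proof.
  intros HY; split; [apply eta_le, is_con_con_gen |].
  apply con_gen_least; [apply is_con_eta, is_con_con_gen |].
  intros p q [r [Hr H]]; destruct (HY r Hr) as [_ [_ E]].
  apply E in H; revert H; apply eta_mono, con_bigjoin_incl, Hr.
Qed.

Lemma eta_fixed_principal_bigjoin (t : rel S) : is_con t -> con_eq (eta t) t ->
  con_eq t (con_bigjoin (fun r => exists i, t i 0 /\ r = con_gen (pair_rel i 0))).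
Proof.
  intros Ht [_ E].
  set (B := con_bigjoin (fun r => exists i, t i 0 /\ r = con_gen (pair_rel i 0))).
  assert (HB : is_con B) by apply is_con_con_gen.
  split.
  - intros p q H; apply E in H; apply (eta_le B HB); revert H.
    apply eta_mono_zero_class; intros i Hi.
    apply (con_bigjoin_incl _ (con_gen (pair_rel i 0))); [exists i; auto |].
    apply con_gen_incl; split; reflexivity.
  - apply con_gen_least; [exact Ht |].
    intros p q [r [[i [Hi ->]] H]]; revert H; apply con_gen_pair_least; assumption.
Qed.

Lemma eta_image_compact_bigjoin (t : rel S) : is_con t ->
  (in_eta_image t <->
   exists Y : rel S -> Prop,
     (forall r, Y r -> is_con r /\ con_compact r /\ in_eta_image r) /\
     con_eq t (con_bigjoin Y)).
Proof.
  intros Ht; rewrite (in_eta_image_fixed t Ht); split.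
  - intros E; eexists; split; [| exact (eta_fixed_principal_bigjoin t Ht E)].
    intros r [i [_ ->]]; split; [apply is_con_con_gen |]; split.
    + apply con_compact_principal.
    + apply in_eta_image_fixed; [apply is_con_con_gen | apply eta_principal_zero].
  - intros [Y [HY [E1 E2]]].
    assert (HYfix : forall r, Y r -> is_con r /\ con_eq (eta r) r).
    { intros r Hr; destruct (HY r Hr) as [Hrc [_ Hri]].
      split; [exact Hrc | apply in_eta_image_fixed; assumption]. }
    destruct (eta_fixed_bigjoin Y HYfix) as [_ F]; split; [apply eta_le, Ht |].
    intros p q H; apply E1, F in H; revert H; apply eta_mono; exact E2.
Qed.

End ConSLO.

Theorem theorem5p5 (S : SLO) :
  (* eta is a map Con S -> Con S *)
  (forall x : rel S, is_con x -> is_con (eta x)) /\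
  (* (I1) *)
  (forall x : rel S, is_con x -> con_le (eta x) x) /\
  (* (I2) *)
  (forall x y : rel S, is_con x -> is_con y -> con_le y x ->
     con_le (eta y) (eta x)) /\
  (* (I3) *)
  (forall x : rel S, is_con x -> con_eq (eta (eta x)) (eta x)) /\
  (* (I4) *)
  con_eq (eta (con_top S)) (con_top S) /\
  (* (I5) *)
  (forall (X : rel S -> Prop) (u : rel S),
     (forall x, X x -> is_con x) -> (exists x, X x) -> is_con u ->
     (forall x, X x -> con_eq (eta x) u) ->
     con_eq (eta (con_bigjoin X)) u) /\
  (* (I6) *)
  (forall x y z : rel S, is_con x -> is_con y -> is_con z ->
     con_eq (con_join (eta x) (con_meet y z))
            (con_meet (con_join (eta x) y) (con_join (eta x) z))) /\
  (* (I7) eta(L) = set of all joins of subsets of eta(L) ∩ L_c *)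
  (forall t : rel S, is_con t ->
     (in_eta_image t <->
      exists Y : rel S -> Prop,
        (forall r, Y r -> is_con r /\ con_compact r /\ in_eta_image r) /\
        con_eq t (con_bigjoin Y))).
Proof.
  split; [exact (is_con_eta S) |].
  split; [exact (eta_le S) |].
  split; [intros x y _ _; apply eta_mono |].
  split; [exact (eta_idem S) |].
  split; [exact (eta_top S) |].
  split; [exact (eta_bigjoin_const S) |].
  split; [exact (con_join_eta_distr S) |].
  exact (eta_image_compact_bigjoin S).
Qed.
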